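(* Let $p,q\in\mathbb{K}[z]$ with $q\neq 0$ and $p/q$ a rational invariant. Then $p(Z)\,q(z)-q(Z)\,p(z)\in O$.
   Context: Let $\mathbb{K}$ be an algebraically closed field; $\lambda=(\lambda_1,\dots,\lambda_l)$, $z=(z_1,\dots,z_n)$, $Z=(Z_1,\dots,Z_n)$ indeterminates. An algebraic group $\mathcal{G}\subset\mathbb{K}^l$ is the variety of a radical unmixed-dimensional ideal $G\subset\mathbb{K}[\lambda]$ with polynomial group operations and neutral element $e$. A rational action is $g=(g_1,\dots,g_n)$, $g_i\in h^{-1}\mathbb{K}[\lambda,z]$, with $g(e,\bar z)=\bar z$ and $g(\bar\mu,g(\bar\lambda,\bar z))=g(\bar\mu\cdot\bar\lambda,\bar z)$ whenever both sides are defined; assume (i) for every $\bar z$, $h(\lambda,\bar z)$ is not a zero divisor modulo $G$, (ii) for every $\bar\lambda\in\mathcal{G}$ some $(\bar\lambda,\bar z)$ lies in the domain of $g$. $O=\big(G+(Z-g(\lambda,z))\big)\cap\mathbb{K}[z,Z]$, the sum being an ideal of $h^{-1}\mathbb{K}[\lambda,z,Z]$. A rational invariant is $r\in\mathbb{K}(z)$ with $r(g(\lambda,z))=r(z)$ modulo $G$. *)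

From HB Require Import structures.
From mathcomp Require Import all_boot all_order all_algebra.
From mathcomp Require Import fraction.
From mathcomp Require Import mpoly.
Set Implicit Arguments. Unset Strict Implicit. Unset Printing Implicit Defensive.
Import Order.TTheory GRing.Theory.
Local Open Scope ring_scope.

Notation "x %:F" := (@FracField.tofrac _ x) : ring_scope.

Definition is_ideal (R : comNzRingType) (I : R -> Prop) : Prop :=
  I 0 /\ (forall a b, I a -> I b -> I (a + b)) /\ (forall r a, I a -> I (r * a)).

Definition radical_ideal (R : comNzRingType) (I : R -> Prop) : Prop :=
  is_ideal I /\ forall (f : R) (k : nat), I (f ^+ k) -> I f.

Definition prime_ideal (R : comNzRingType) (P : R -> Prop) : Prop :=
  is_ideal P /\ ~ P 1 /\ forall a b, P (a * b) -> P a \/ P b.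

Definition subideal (R : comNzRingType) (I J : R -> Prop) : Prop :=
  forall x, I x -> J x.

Definition minimal_prime_over (R : comNzRingType) (I P : R -> Prop) : Prop :=
  prime_ideal P /\ subideal I P /\
  forall Q, prime_ideal Q -> subideal I Q -> subideal Q P -> subideal P Q.

Definition prime_chain_from (R : comNzRingType) (P : R -> Prop) (d : nat) : Prop :=
  exists C : nat -> R -> Prop,
    (forall x, C 0%N x <-> P x) /\
    (forall i, (i <= d)%N -> prime_ideal (C i)) /\
    (forall i, (i < d)%N -> subideal (C i) (C i.+1) /\ ~ subideal (C i.+1) (C i)).

(* Krull dimension of R/P for a prime P: maximal length of a prime chain from P *)
Definition prime_dim (R : comNzRingType) (P : R -> Prop) (d : nat) : Prop :=
  prime_chain_from P d /\ ~ prime_chain_from P d.+1.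

(* unmixed-dimensional (for a radical ideal): all minimal primes over I
   (= all irreducible components of its variety) have the same dimension *)
Definition unmixed_dim (R : comNzRingType) (I : R -> Prop) : Prop :=
  exists d, forall P, minimal_prime_over I P -> prime_dim P d.

Definition is_zero_divisor_mod (R : comNzRingType) (I : R -> Prop) (a : R) : Prop :=
  exists b, ~ I b /\ I (a * b).

(* Localization h^{-1} R inside the fraction field of the domain R.    *)

Definition in_loc (R : idomainType) (h : R) (x : {fraction R}) : Prop :=
  exists (a : R) (m : nat), x = a%:F / (h%:F) ^+ m.

Definition loc_gen_ideal (R : idomainType) (h : R) (S : {fraction R} -> Prop)
  (x : {fraction R}) : Prop :=
  exists (k : nat) (c s : 'I_k -> {fraction R}),
    (forall i, in_loc h (c i)) /\ (forall i, S (s i)) /\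
    x = \sum_(i < k) c i * s i.

(* K[lambda] = {mpoly K[l]}, K[lambda,z] = {mpoly K[l+n]} (lambda first),
   K[z] = {mpoly K[n]}, K[z,Z] = {mpoly K[n+n]} (z first),
   K[lambda,z,Z] = {mpoly K[l+n+n]} (lambda, then z, then Z).          *)

Section Setting.
Variable K : fieldType.

Definition pair_pt (a b : nat) (u : 'I_a -> K) (v : 'I_b -> K) : 'I_(a + b) -> K :=
  fun k => match split k with inl i => u i | inr j => v j end.

Definition subst (a b : nat) (s : 'I_a -> {mpoly K[b]}) (p : {mpoly K[a]}) : {mpoly K[b]} :=
  mmap (@mpolyC b K) s p.

Definition in_variety (l : nat) (G : {mpoly K[l]} -> Prop) (x : 'I_l -> K) : Prop :=
  forall f, G f -> f.@[x] = 0.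

Definition gmul (l : nat) (mu : 'I_l -> {mpoly K[l + l]}) (x y : 'I_l -> K) : 'I_l -> K :=
  fun i => (mu i).@[pair_pt x y].

Definition ginv (l : nat) (iv : 'I_l -> {mpoly K[l]}) (x : 'I_l -> K) : 'I_l -> K :=
  fun i => (iv i).@[x].

Definition algebraic_group (l : nat) (G : {mpoly K[l]} -> Prop)
  (mu : 'I_l -> {mpoly K[l + l]}) (iv : 'I_l -> {mpoly K[l]}) (e : 'I_l -> K) : Prop :=
  let V := in_variety G in
  [/\ V e,
      (forall x y, V x -> V y -> V (gmul mu x y)),
      (forall x, V x -> V (ginv iv x)),
      (forall x y w, V x -> V y -> V w ->
          gmul mu (gmul mu x y) w =1 gmul mu x (gmul mu y w))
    & (forall x, V x -> [/\ gmul mu e x =1 x, gmul mu x e =1 x,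
                            gmul mu (ginv iv x) x =1 e & gmul mu x (ginv iv x) =1 e])].

Definition act_defined (l n : nat) (h : {mpoly K[l + n]}) (x : 'I_l -> K) (z : 'I_n -> K) : Prop :=
  h.@[pair_pt x z] != 0.

Definition act_val (l n : nat) (h : {mpoly K[l + n]}) (N : 'I_n -> {mpoly K[l + n]})
  (ex : 'I_n -> nat) (x : 'I_l -> K) (z : 'I_n -> K) : 'I_n -> K :=
  fun i => (N i).@[pair_pt x z] / (h.@[pair_pt x z]) ^+ ex i.

Definition h_at (l n : nat) (h : {mpoly K[l + n]}) (z : 'I_n -> K) : {mpoly K[l]} :=
  subst (fun k : 'I_(l + n) => match split k with inl i => 'X_i | inr j => (z j)%:MP end) h.

Definition rational_action (l n : nat) (G : {mpoly K[l]} -> Prop)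
  (mu : 'I_l -> {mpoly K[l + l]}) (e : 'I_l -> K)
  (h : {mpoly K[l + n]}) (N : 'I_n -> {mpoly K[l + n]}) (ex : 'I_n -> nat) : Prop :=
  let V := in_variety G in
  let g := act_val h N ex in
  [/\ (forall z, act_defined h e z -> g e z =1 z),
      (forall x y z, V x -> V y ->
          act_defined h y z -> act_defined h x (g y z) ->
          act_defined h (gmul mu x y) z ->
          g x (g y z) =1 g (gmul mu x y) z),
      (forall z, ~ is_zero_divisor_mod G (h_at h z))
    &
      (forall x, V x -> exists z, act_defined h x z)].

Definition embL (l n : nat) (f : {mpoly K[l]}) : {mpoly K[l + n]} :=
  subst (fun i => 'X_(lshift n i)) f.
Definition embz (l n : nat) (f : {mpoly K[n]}) : {mpoly K[l + n]} :=
  subst (fun j => 'X_(rshift l j)) f.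
Definition embLz (l n : nat) (f : {mpoly K[l + n]}) : {mpoly K[l + n + n]} :=
  subst (fun k => 'X_(lshift n k)) f.
Definition embzZ (l n : nat) (f : {mpoly K[n + n]}) : {mpoly K[l + n + n]} :=
  subst (fun k : 'I_(n + n) => match split k with
           | inl j => 'X_(lshift n (rshift l j))
           | inr j => 'X_(rshift (l + n) j) end) f.
Definition as_z (n : nat) (p : {mpoly K[n]}) : {mpoly K[n + n]} :=
  subst (fun j => 'X_(lshift n j)) p.
Definition as_Z (n : nat) (p : {mpoly K[n]}) : {mpoly K[n + n]} :=
  subst (fun j => 'X_(rshift n j)) p.

Definition g_frac (l n : nat) (h : {mpoly K[l + n]}) (N : 'I_n -> {mpoly K[l + n]})
  (ex : 'I_n -> nat) (i : 'I_n) : {fraction {mpoly K[l + n]}} :=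
  (N i)%:F / (h%:F) ^+ ex i.

Definition comp_g (l n : nat) (h : {mpoly K[l + n]}) (N : 'I_n -> {mpoly K[l + n]})
  (ex : 'I_n -> nat) (p : {mpoly K[n]}) : {fraction {mpoly K[l + n]}} :=
  mmap (fun c : K => (c%:MP : {mpoly K[l + n]})%:F) (g_frac h N ex) p.

(* p/q is a rational invariant: p(g(lambda,z)) / q(g(lambda,z)) = p(z)/q(z)
   modulo G, read with denominators cleared in h^{-1}K[lambda,z]:
   p(g) q(z) - q(g) p(z) lies in the ideal generated by G there. *)
Definition rational_invariant (l n : nat) (G : {mpoly K[l]} -> Prop)
  (h : {mpoly K[l + n]}) (N : 'I_n -> {mpoly K[l + n]}) (ex : 'I_n -> nat)
  (p q : {mpoly K[n]}) : Prop :=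
  loc_gen_ideal h (fun y => exists f, G f /\ y = (embL n f)%:F)
    (comp_g h N ex p * (embz l q)%:F - comp_g h N ex q * (embz l p)%:F).

(* O = (G + (Z - g(lambda,z))) /\ K[z,Z], the sum taken as an ideal of
   h^{-1}K[lambda,z,Z] *)
Definition orbit_ideal (l n : nat) (G : {mpoly K[l]} -> Prop)
  (h : {mpoly K[l + n]}) (N : 'I_n -> {mpoly K[l + n]}) (ex : 'I_n -> nat)
  (f : {mpoly K[n + n]}) : Prop :=
  let H := embLz h in
  loc_gen_ideal H
    (fun y => (exists f0, G f0 /\ y = (embLz (embL n f0))%:F) \/
              (exists i : 'I_n, y = ('X_(rshift (l + n) i))%:F
                                      - (embLz (N i))%:F / (H%:F) ^+ ex i))
    ((embzZ l f)%:F).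

End Setting.

From HB Require Import structures.
From mathcomp Require Import all_boot all_order all_algebra.
From mathcomp Require Import fraction mpoly generic_quotient.
(* Modulo the generators [Z_i - g_i] of the orbit ideal, any polynomial in
   [Z] is congruent to the same polynomial evaluated at [g(lambda, z)]; hence
   [p(Z) q(z) - q(Z) p(z)] is congruent to [p(g) q(z) - q(g) p(z)], which lies
   in the ideal generated by [G] by invariance.  Invariance is a relation in
   [h^-1 K[lambda, z]]; it is transported to [h^-1 K[lambda, z, Z]] along the
   map of fraction fields induced by [K[lambda, z] -> K[lambda, z, Z]]. *)

Set Implicit Arguments. Unset Strict Implicit. Unset Printing Implicit Defensive.
Import GRing.Theory.
Local Open Scope ring_scope.

Lemma tofrac_numden (R : idomainType) (x : {fraction R}) :
  x = (\n_(repr x))%:F / (\d_(repr x))%:F.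
Proof.
rewrite -{1}[x]reprK; set r := repr x.
have nzd : (\d_r)%:F != 0 :> {fraction R} by rewrite tofrac_eq0 denom_ratioP.
apply: (mulfI nzd); rewrite [RHS]mulrCA mulfV // mulr1.
unlock FracField.tofrac; rewrite -[LHS]FracField.pi_mul; apply/eqmodP.
rewrite /= FracField.equivfE /FracField.mulf /=.
by rewrite !numden_Ratio ?mulf_neq0 ?oner_neq0 ?denom_ratioP // mulr1 mul1r.
Qed.

Lemma eq_mmap n (R S : ringType) (f1 f2 : R -> S) (s1 s2 : 'I_n -> S) p :
  f1 =1 f2 -> s1 =1 s2 -> mmap f1 s1 p = mmap f2 s2 p.
Proof.
by move=> ef es; apply: eq_bigr => m _; rewrite ef (mmap1_eq _ es).
Qed.

Lemma rmorph_mmap n (R S T : ringType) (c : R -> S) (s : 'I_n -> S)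
    (g : {rmorphism S -> T}) p :
  g (mmap c s p) = mmap (g \o c) (g \o s) p.
Proof.
rewrite /mmap rmorph_sum; apply: eq_bigr => m _.
rewrite rmorphM rmorph_prod; congr (_ * _); apply: eq_bigr => i _.
exact: rmorphXn.
Qed.

Section Substitution.
Variable K : fieldType.

HB.instance Definition _ (a b : nat) (s : 'I_a -> {mpoly K[b]}) :=
  GRing.RMorphism.copy (subst s) (mmap (@mpolyC b K) s).

Lemma subst_X a b (s : 'I_a -> {mpoly K[b]}) i : subst s 'X_i = s i.
Proof. by rewrite /subst mmapX mmap1U. Qed.

Lemma subst_C a b (s : 'I_a -> {mpoly K[b]}) c : subst s c%:MP = c%:MP.
Proof. exact: mmapC. Qed.

Lemma subst_comp a b c (s1 : 'I_a -> {mpoly K[b]}) (s2 : 'I_b -> {mpoly K[c]}) p :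
  subst s2 (subst s1 p) = subst (fun i => subst s2 (s1 i)) p.
Proof. by rewrite [LHS]rmorph_mmap; apply: eq_mmap => x //=; apply: subst_C. Qed.

Lemma subst_id a (p : {mpoly K[a]}) : subst (fun i => 'X_i) p = p.
Proof.
rewrite -[RHS](comp_mpoly_id p); apply: eq_mmap => // i.
by rewrite tnth_mktuple.
Qed.

HB.instance Definition _ l n :=
  GRing.RMorphism.copy (@embLz K l n) (subst (fun k => 'X_(lshift n k))).

HB.instance Definition _ l n :=
  GRing.RMorphism.copy (@embzZ K l n) (subst (fun k : 'I_(n + n) =>
    match split k with
    | inl j => 'X_(lshift n (rshift l j))
    | inr j => 'X_(rshift (l + n) j) end)).

Lemma embLz_inj l n : injective (@embLz K l n).
Proof.
pose drop_Z (k : 'I_(l + n + n)) : {mpoly K[l + n]} :=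
  if split k is inl i then 'X_i else 0.
have embLzK : cancel (@embLz K l n) (subst drop_Z).
  move=> p; rewrite subst_comp -[RHS]subst_id; apply: eq_mmap => // i.
  by rewrite subst_X /drop_Z (unsplitK (inl _ i)).
exact: can_inj embLzK.
Qed.

End Substitution.

Section Localization.
Variables (R : idomainType) (h : R).

Lemma in_loc_tofrac a : in_loc h a%:F.
Proof. by exists a, 0%N; rewrite expr0 divr1. Qed.

(* With [0^-1 = 0], the "fractions" [a / 0 ^+ m] are just [R] again. *)
Lemma in_loc0_tofrac x : in_loc (0 : R) x -> exists a, x = a%:F.
Proof.
case=> a [[|m] ->]; first by exists a; rewrite expr0 divr1.
by exists 0; rewrite tofrac0 expr0n invr0 mulr0.
Qed.

Lemma in_locD x y : in_loc h x -> in_loc h y -> in_loc h (x + y).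
Proof.
have [-> | nzh] := eqVneq h 0.
  move=> /in_loc0_tofrac[a ->] /in_loc0_tofrac[b ->].
  by exists (a + b), 0%N; rewrite expr0 divr1 tofracD.
have nzhF : h%:F != 0 by rewrite tofrac_eq0.
case=> [a [m ->]] [b [k ->]]; exists (a * h ^+ k + b * h ^+ m), (m + k)%N.
by rewrite addf_div ?expf_neq0 // rmorphD !rmorphM !rmorphXn exprD.
Qed.

Lemma in_locM x y : in_loc h x -> in_loc h y -> in_loc h (x * y).
Proof.
case=> [a [m ->]] [b [k ->]]; exists (a * b), (m + k)%N.
by rewrite rmorphM exprD invfM mulrACA.
Qed.

Lemma in_locN x : in_loc h x -> in_loc h (- x).
Proof. by case=> [a [m ->]]; exists (- a), m; rewrite rmorphN mulNr. Qed.

Variable S : {fraction R} -> Prop.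
Local Notation J := (loc_gen_ideal h S).

Lemma loc_gen_ideal_gen y : S y -> J y.
Proof.
move=> Sy; exists 1%N, (fun _ => 1), (fun _ => y).
split=> [_|]; first by rewrite -tofrac1; apply: in_loc_tofrac.
by split=> //; rewrite big_ord1 mul1r.
Qed.

Lemma loc_gen_idealD x y : J x -> J y -> J (x + y).
Proof.
case=> [k1 [c1 [s1 [Hc1 [Hs1 ->]]]]] [k2 [c2 [s2 [Hc2 [Hs2 ->]]]]].
pose glue T (u : 'I_k1 -> T) (v : 'I_k2 -> T) (i : 'I_(k1 + k2)) :=
  match split i with inl j => u j | inr j => v j end.
exists (k1 + k2)%N, (glue _ c1 c2), (glue _ s1 s2).
split=> [i|]; first by rewrite /glue; case: (split i).
split=> [i|]; first by rewrite /glue; case: (split i).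
by rewrite big_split_ord /glue; congr (_ + _); apply: eq_bigr => i _;
  rewrite ?(unsplitK (inl _ i)) ?(unsplitK (inr _ i)).
Qed.

Lemma loc_gen_idealMl d x : in_loc h d -> J x -> J (d * x).
Proof.
move=> hd [k [c [s [Hc [Hs ->]]]]]; exists k, (fun i => d * c i), s.
split=> [i|]; first exact: in_locM.
by split=> //; rewrite mulr_sumr; apply: eq_bigr => i _; rewrite mulrA.
Qed.

Definition loc_congr x y := [/\ in_loc h x, in_loc h y & J (x - y)].

Lemma loc_congr_refl x : in_loc h x -> loc_congr x x.
Proof.
move=> hx; split=> //; rewrite subrr.
exists 0%N, (fun _ => 0), (fun _ => 0).
by split=> [[]|] //; split=> [[]|] //; rewrite big_ord0.
Qed.

Lemma loc_congr_ideal x y : loc_congr x y -> J y -> J x.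
Proof. by case=> _ _ Jxy Jy; rewrite -(subrK y x); apply: loc_gen_idealD. Qed.

Lemma loc_congrD x1 x2 y1 y2 :
  loc_congr x1 x2 -> loc_congr y1 y2 -> loc_congr (x1 + y1) (x2 + y2).
Proof.
case=> hx1 hx2 Jx [hy1 hy2 Jy]; split; try exact: in_locD.
by rewrite opprD addrACA; apply: loc_gen_idealD.
Qed.

Lemma loc_congrN x y : loc_congr x y -> loc_congr (- x) (- y).
Proof.
case=> hx hy Jxy; split; try exact: in_locN.
rewrite -opprD -mulN1r; apply: loc_gen_idealMl Jxy.
by rewrite -tofrac1 -tofracN; apply: in_loc_tofrac.
Qed.

Lemma loc_congrM x1 x2 y1 y2 :
  loc_congr x1 x2 -> loc_congr y1 y2 -> loc_congr (x1 * y1) (x2 * y2).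
Proof.
case=> hx1 hx2 Jx [hy1 hy2 Jy]; split; try exact: in_locM.
have -> : x1 * y1 - x2 * y2 = x1 * (y1 - y2) + y2 * (x1 - x2).
  by rewrite !mulrBr [y2 * _]mulrC addrA subrK [y2 * _]mulrC.
by apply: loc_gen_idealD; apply: loc_gen_idealMl.
Qed.

Lemma loc_congr_mmap n (A : ringType) (c : A -> {fraction R})
    (u v : 'I_n -> {fraction R}) p :
  (forall a, in_loc h (c a)) -> (forall i, loc_congr (u i) (v i)) ->
  loc_congr (mmap c u p) (mmap c v p).
Proof.
move=> hc huv; have refl_tofrac a : loc_congr a%:F a%:F.
  exact/loc_congr_refl/in_loc_tofrac.
apply: (big_rec2 loc_congr); first by rewrite -tofrac0.
move=> m y1 y2 _ Hy; apply: loc_congrD => //.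
apply: loc_congrM; first exact/loc_congr_refl/hc.
apply: (big_rec2 loc_congr); first by rewrite -tofrac1.
move=> i z1 z2 _ Hz; apply: loc_congrM => //.
elim: (m i) => [|k IH]; first by rewrite !expr0 -tofrac1.
by rewrite !exprS; apply: loc_congrM.
Qed.

End Localization.

Section FracMap.
Variables (R S : idomainType) (f : {rmorphism R -> S}).
Hypothesis f_inj : injective f.

(* The injectivity proof is an argument only so that the ring-morphism
   instance below can be keyed on [frac_map f_inj]. *)
Definition frac_map of injective f : {fraction R} -> {fraction S} :=
  fun x => (f \n_(repr x))%:F / (f \d_(repr x))%:F.

Let tofrac_f_neq0 b : b != 0 -> (f b)%:F != 0.
Proof. by move=> nzb; rewrite tofrac_eq0 -(rmorph0 f) (inj_eq f_inj). Qed.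

Lemma frac_mapE a b : b != 0 -> frac_map f_inj (a%:F / b%:F) = (f a)%:F / (f b)%:F.
Proof.
move=> nzb; rewrite /frac_map; set r := repr _.
have nzd : \d_r != 0 := denom_ratioP r.
have cross : a * \d_r = \n_r * b.
  apply/eqP; rewrite -tofrac_eq !tofracM -eqr_div ?tofrac_eq0 //.
  by rewrite -tofrac_numden.
apply/eqP; rewrite eqr_div ?tofrac_f_neq0 //.
by rewrite -!tofracM -!rmorphM cross.
Qed.

Lemma frac_map_tofrac a : frac_map f_inj a%:F = (f a)%:F.
Proof.
by rewrite -[a%:F]divr1 -tofrac1 frac_mapE ?oner_neq0 // rmorph1 tofrac1 divr1.
Qed.

Let frac_ind (P : {fraction R} -> Prop) :
  (forall a b, b != 0 -> P (a%:F / b%:F)) -> forall x, P x.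
Proof. by move=> IH x; rewrite [x]tofrac_numden; apply/IH/denom_ratioP. Qed.

Lemma frac_map_is_zmod_morphism : zmod_morphism (frac_map f_inj).
Proof.
elim/frac_ind => a b nzb; elim/frac_ind => c d nzd.
have nzF (u : R) : u != 0 -> u%:F != 0 by rewrite tofrac_eq0.
rewrite -mulNr -tofracN (addf_div _ _ (nzF _ nzb) (nzF _ nzd)) -!tofracM -tofracD.
rewrite !frac_mapE ?mulf_neq0 // -mulNr.
rewrite (addf_div _ _ (tofrac_f_neq0 nzb) (tofrac_f_neq0 nzd)).
by rewrite rmorphD !rmorphM rmorphN tofracD !tofracM tofracN mulNr.
Qed.

Lemma frac_map_is_monoid_morphism : monoid_morphism (frac_map f_inj).
Proof.
split; first by rewrite -tofrac1 frac_map_tofrac rmorph1.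
elim/frac_ind => a b nzb; elim/frac_ind => c d nzd.
by rewrite mulf_div -!tofracM !frac_mapE ?mulf_neq0 // mulf_div !rmorphM.
Qed.

HB.instance Definition _ := GRing.isZmodMorphism.Build _ _ (frac_map f_inj)
  frac_map_is_zmod_morphism.
HB.instance Definition _ := GRing.isMonoidMorphism.Build _ _ (frac_map f_inj)
  frac_map_is_monoid_morphism.

Lemma frac_map_in_loc h x : in_loc h x -> in_loc (f h) (frac_map f_inj x).
Proof.
case=> a [m ->]; exists (f a), m.
by rewrite rmorphM fmorphV rmorphXn /= !frac_map_tofrac.
Qed.

Lemma frac_map_loc_gen_ideal h (SR : {fraction R} -> Prop)
    (SS : {fraction S} -> Prop) x :
  (forall y, SR y -> SS (frac_map f_inj y)) ->
  loc_gen_ideal h SR x -> loc_gen_ideal (f h) SS (frac_map f_inj x).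
Proof.
move=> hS [k [c [s [hc [hs ->]]]]].
exists k, (frac_map f_inj \o c), (frac_map f_inj \o s).
split=> [i|]; first exact: frac_map_in_loc.
split=> [i|]; first exact: hS.
by rewrite rmorph_sum; apply: eq_bigr => i _; rewrite rmorphM.
Qed.

End FracMap.

Section OrbitIdeal.
Variables (K : fieldType) (l n : nat) (G : {mpoly K[l]} -> Prop).
Variables (h : {mpoly K[l + n]}) (N : 'I_n -> {mpoly K[l + n]}) (ex : 'I_n -> nat).

Definition orbit_gens (y : {fraction {mpoly K[l + n + n]}}) : Prop :=
  (exists f0, G f0 /\ y = (embLz (embL n f0))%:F) \/
  (exists i : 'I_n, y = ('X_(rshift (l + n) i))%:F
                        - (embLz (N i))%:F / ((embLz h)%:F) ^+ ex i).

Local Notation embF := (frac_map (@embLz_inj K l n)).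
Local Notation cstF := (fun c : K => (c%:MP : {mpoly K[l + n + n]})%:F).
Local Notation congr_orbit := (loc_congr (embLz h) orbit_gens).

Lemma frac_map_g_frac i :
  embF (g_frac h N ex i) = (embLz (N i))%:F / ((embLz h)%:F) ^+ ex i.
Proof. by rewrite /g_frac rmorphM fmorphV rmorphXn /= !frac_map_tofrac. Qed.

Lemma frac_map_comp_g r :
  embF (comp_g h N ex r) = mmap cstF (embF \o g_frac h N ex) r.
Proof.
rewrite rmorph_mmap; apply: eq_mmap => // c /=.
by rewrite frac_map_tofrac; congr _%:F; apply: subst_C.
Qed.

Lemma tofrac_embzZ_as_Z r :
  (embzZ l (as_Z r))%:F = mmap cstF (fun i => ('X_(rshift (l + n) i))%:F) r.
Proof.
rewrite /embzZ /as_Z subst_comp {1}/subst rmorph_mmap.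
by apply: eq_mmap => // j /=; rewrite subst_X (unsplitK (inr _ j)).
Qed.

Lemma embzZ_as_z r : embzZ l (as_z r) = @embLz K l n (embz l r).
Proof.
rewrite /embzZ /as_z /embLz /embz !subst_comp; apply: eq_mmap => // j.
by rewrite !subst_X (unsplitK (inl _ j)).
Qed.

Lemma Z_congr_g_frac i :
  congr_orbit ('X_(rshift (l + n) i))%:F (embF (g_frac h N ex i)).
Proof.
rewrite frac_map_g_frac; split; first exact: in_loc_tofrac.
  by exists (embLz (N i)), (ex i).
by apply: loc_gen_ideal_gen; right; exists i.
Qed.

Lemma as_Z_congr_comp_g r : congr_orbit (embzZ l (as_Z r))%:F (embF (comp_g h N ex r)).
Proof.
rewrite tofrac_embzZ_as_Z frac_map_comp_g.
by apply: loc_congr_mmap => [c|i]; [apply: in_loc_tofrac | apply: Z_congr_g_frac].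
Qed.

Lemma orbit_ideal_rational_invariant p q :
  rational_invariant G h N ex p q ->
  orbit_ideal G h N ex (as_Z p * as_z q - as_Z q * as_z p).
Proof.
move=> /(frac_map_loc_gen_ideal (f_inj := @embLz_inj K l n) (SS := orbit_gens)) Jinv.
apply: (loc_congr_ideal _ (Jinv _)); last first.
  by move=> _ [f0 [Gf0 ->]]; left; exists f0; split; last apply: frac_map_tofrac.
rewrite !rmorphB !rmorphM.
have congr_z r : congr_orbit (embzZ l (as_z r))%:F (embF (embz l r)%:F).
  rewrite embzZ_as_z -[X in congr_orbit X](frac_map_tofrac (@embLz_inj K l n)).
  exact/loc_congr_refl/frac_map_in_loc/in_loc_tofrac.
apply: loc_congrD; last apply: loc_congrN.
all: by apply: loc_congrM; [apply: as_Z_congr_comp_g | apply: congr_z].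
Qed.

End OrbitIdeal.

Theorem mainTheorem3 (K : closedFieldType) (l n : nat)
  (G : {mpoly K[l]} -> Prop)
  (mu : 'I_l -> {mpoly K[l + l]}) (iv : 'I_l -> {mpoly K[l]}) (e : 'I_l -> K)
  (h : {mpoly K[l + n]}) (N : 'I_n -> {mpoly K[l + n]}) (ex : 'I_n -> nat)
  (HG : radical_ideal G) (HGu : unmixed_dim G)
  (Hgrp : algebraic_group G mu iv e)
  (Hact : rational_action G mu e h N ex)
  (p q : {mpoly K[n]}) (Hq : q != 0)
  (Hinv : rational_invariant G h N ex p q) :
  orbit_ideal G h N ex (as_Z p * as_z q - as_Z q * as_z p).
Proof. exact: orbit_ideal_rational_invariant Hinv. Qed.
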